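(* Let $2\le n\le\infty$. (1) If $a\in A\setminus C$ is $n$-RF rel a subgroup $C\le A$, then it is $m$-RF rel $C$ for every $2\le m\le n$. (2) For subgroups $C\le B\le A$, if $a\in A\setminus B$ is $n$-RF rel $B$, then it is $n$-RF rel $C$. (3) For subgroups $C\le B\le A$, if $(A,B)$ and $(B,C)$ are both $n$-RF, then $(A,C)$ is $n$-RF.
   Context: For a group $G$, subgroup $D$, and $2\le n\le\infty$: $a\in G\setminus D$ is $n$-RF rel $D$ if $a^{e_1}d_1\cdots a^{e_k}d_k\ne\mathrm{id}$ for all $k\ge1$, $e_i\in\{\pm1\}$, $d_i\in D$ such that $d_i\ne\mathrm{id}$ whenever $e_i=-e_{i+1}$ (indices mod $k$), and fewer than $n$ of the $e_i$ are $+1$ and fewer than $n$ are $-1$. The pair $(G,D)$ is $n$-RF if every element of $G\setminus D$ is $n$-RF rel $D$. *)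

From mathcomp Require Import all_boot.
Set Implicit Arguments. Unset Strict Implicit. Unset Printing Implicit Defensive.

Record grp := Grp {
  gcar :> Type;
  gmul : gcar -> gcar -> gcar;
  ginv : gcar -> gcar;
  gone : gcar;
  gmulA : forall x y z, gmul x (gmul y z) = gmul (gmul x y) z;
  gmul1g : forall x, gmul gone x = x;
  gmulg1 : forall x, gmul x gone = x;
  gmulVg : forall x, gmul (ginv x) x = gone;
  gmulgV : forall x, gmul x (ginv x) = gone
}.

Definition is_subgroup (G : grp) (D : G -> Prop) : Prop :=
  D (gone G) /\ (forall x y, D x -> D y -> D (gmul x y)) /\
  (forall x, D x -> D (ginv x)).

Inductive natinf := Fin of nat | Inf.

Definition lt_ni (k : nat) (n : natinf) : Prop :=
  match n with Fin m => (k < m)%N | Inf => True end.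

Definition le_ni (m n : natinf) : Prop :=
  match m, n with
  | Fin a, Fin b => (a <= b)%N
  | _, Inf => True
  | Inf, Fin _ => False
  end.

Definition two_le (n : natinf) : Prop := le_ni (Fin 2) n.

(* a^e with e : bool (true = +1, false = -1) *)
Definition apow (G : grp) (a : G) (e : bool) : G := if e then a else ginv a.

(* A word is a sequence [(e_1,d_1); ...; (e_k,d_k)];
   its value is a^{e_1} d_1 ... a^{e_k} d_k. *)
Definition word_val (G : grp) (a : G) (w : seq (bool * G)) : G :=
  foldr (fun p acc => gmul (gmul (apow a p.1) p.2) acc) (gone G) w.

Definition wnth (G : grp) (w : seq (bool * G)) (i : nat) : bool * G :=
  nth (true, gone G) w i.

Definition admissible (G : grp) (D : G -> Prop) (n : natinf)
    (w : seq (bool * G)) : Prop :=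
  (0 < size w)%N /\
  (forall i, (i < size w)%N -> D (wnth w i).2) /\
  (forall i, (i < size w)%N ->
     (wnth w i).1 = ~~ (wnth w ((i.+1) %% size w)).1 ->
     (wnth w i).2 <> gone G) /\
  lt_ni (count (fun p => p.1) w) n /\
  lt_ni (count (fun p => ~~ p.1) w) n.

Definition nRF_rel (G : grp) (D : G -> Prop) (n : natinf) (a : G) : Prop :=
  ~ D a /\ forall w, admissible D n w -> word_val a w <> gone G.

(* The pair (B, D) is n-RF, where D <= B are subgroups of an ambient group G:
   every element of B \ D is n-RF rel D (computed in B, equivalently in G). *)
Definition pair_nRF (G : grp) (B D : G -> Prop) (n : natinf) : Prop :=
  forall b, B b -> ~ D b -> nRF_rel D n b.

From mathcomp Require Import all_boot.
From Stdlib Require Import Classical.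

Set Implicit Arguments.
Unset Strict Implicit.
Unset Printing Implicit Defensive.

(* Everything is monotonicity of admissibility: a word admissible for a smaller
   bound or a smaller subgroup is admissible for the larger one.  For (3), an
   element outside C either lies in B, where (B, C) applies, or lies outside B,
   where (A, B) applies and is then weakened to C.  None of this uses that the
   predicates are subgroups. *)

Lemma lt_ni_le k m n : le_ni m n -> lt_ni k m -> lt_ni k n.
Proof. by case: m => [a|]; case: n => [b|] //= /[swap]; apply: leq_trans. Qed.

Section Admissible.

Variables (G : grp) (a : G).

Lemma admissible_le (D : G -> Prop) m n w :
  le_ni m n -> admissible D m w -> admissible D n w.
Proof.
move=> lemn [w_gt0 [wD [wnot1 [pos neg]]]].
by do 3 split=> //; split; apply: lt_ni_le lemn _.
Qed.

Lemma admissible_sub (B C : G -> Prop) n w :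
  (forall x, C x -> B x) -> admissible C n w -> admissible B n w.
Proof.
move=> CB [w_gt0 [wC rest]].
by split=> //; split=> // i /wC /CB.
Qed.

Lemma nRF_rel_le (D : G -> Prop) m n :
  le_ni m n -> nRF_rel D n a -> nRF_rel D m a.
Proof. by move=> lemn [nDa rf]; split=> // w /(admissible_le lemn) /rf. Qed.

Lemma nRF_rel_sub (B C : G -> Prop) n :
  (forall x, C x -> B x) -> ~ B a -> nRF_rel B n a -> nRF_rel C n a.
Proof.
move=> CB nBa [_ rf]; split; first by move/CB.
by move=> w /(admissible_sub CB) /rf.
Qed.

End Admissible.

Lemma pair_nRF_trans (G : grp) (A B C : G -> Prop) n :
  (forall x, C x -> B x) -> pair_nRF A B n -> pair_nRF B C n -> pair_nRF A C n.
Proof.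
move=> CB rfAB rfBC b Ab nCb.
have [Bb | nBb] := classic (B b); first exact: rfBC.
exact: nRF_rel_sub CB nBb (rfAB b Ab nBb).
Qed.

Theorem lemma5p21 (A : grp) (n : natinf) (hn : two_le n) :
  (* (1) *)
  (forall C : A -> Prop, is_subgroup C ->
     forall a : A, ~ C a -> nRF_rel C n a ->
     forall m : natinf, two_le m -> le_ni m n -> nRF_rel C m a) /\
  (* (2) *)
  (forall B C : A -> Prop, is_subgroup B -> is_subgroup C ->
     (forall x, C x -> B x) ->
     forall a : A, ~ B a -> nRF_rel B n a -> nRF_rel C n a) /\
  (* (3) *)
  (forall B C : A -> Prop, is_subgroup B -> is_subgroup C ->
     (forall x, C x -> B x) ->
     pair_nRF (fun _ => True) B n -> pair_nRF B C n ->
     pair_nRF (fun _ => True) C n).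
Proof.
split; first by move=> C _ a _ rf m _ lemn; apply: nRF_rel_le rf.
split; first by move=> B C _ _ CB a; apply: nRF_rel_sub CB.
by move=> B C _ _; apply: pair_nRF_trans.
Qed.
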